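(* Let $C_n>0$ and suppose the optimal dual variable satisfies $\lambda\le\kappa\, n^{1/3}/C_n^{1/3}$ for some constant $\kappa>0$. Then, with $x_t$ the predictions of FLH-OGD, $$\sum_{t=1}^n (y_t-x_t)^2-(y_t-u_t)^2\le c\,\log n\,\max\{n^{1/3}C_n^{2/3},1\},$$ where $c>0$ depends only on $B,G,\kappa$.
   Context: Squared loss game: $n\ge 3$, $B\ge 1$, $G\ge B$; for $t=1,\dots,n$ the learner predicts $x_t\in[-B,B]$, then the adversary reveals $y_t\in[-G,G]$. $[a,b]=\{a,\dots,b\}$. FLH-OGD: For each $j\in[n]$ a base learner $E^j$ is started at time $j$; it runs projected online gradient descent on $[-B,B]$ on the losses $x\mapsto (y_t-x)^2$, $t\ge j$: its first prediction $x^{(j)}_j$ is a fixed point of $[-B,B]$, and $x^{(j)}_{t+1}=\Pi\big(x^{(j)}_t-\tfrac{1}{2\tau}\cdot 2(x^{(j)}_t-y_t)\big)$ with $\tau=t-j+1$, $\Pi$ the projection onto $[-B,B]$. The FLH meta-algorithm with learning rate $\zeta$ keeps a probability vector $v_t=(v_t^{(1)},\dots,v_t^{(t)})$, $v_1=(1)$; it predicts $x_t=\sum_{j\le t}v_t^{(j)}x^{(j)}_t$; after $y_t$ is revealed it sets $\hat v^{(i)}_{t+1}=v_t^{(i)}e^{-\zeta(y_t-x_t^{(i)})^2}/\sum_{j\le t}v_t^{(j)}e^{-\zeta(y_t-x_t^{(j)})^2}$ for $i\le t$, then $v^{(t+1)}_{t+1}=1/(t+1)$ and $v^{(i)}_{t+1}=(1-\tfrac1{t+1})\hat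 v^{(i)}_{t+1}$. FLH-OGD uses $\zeta=1/(2(G+B)^2)$. Offline optimal: $u_1,\dots,u_n$ is an optimal solution of: minimize $\frac12\sum_{t=1}^n(y_t-\tilde u_t)^2$ subject to $\sum_{t=2}^{n}|\tilde u_t-\tilde u_{t-1}|\le C_n$ and $-B\le\tilde u_t\le B$; $\lambda\ge0$ is an optimal dual variable for the total variation constraint (with $\gamma^\pm_t\ge 0$ those of the box constraints), satisfying the KKT conditions: there are $s_t\in[-1,1]$ with $s_t=\mathrm{sign}(u_{t+1}-u_t)$ whenever $u_{t+1}\ne u_t$, $s_0=s_n=0$, $u_t-y_t=\lambda(s_t-s_{t-1})+\gamma_t^--\gamma_t^+$, $\lambda(\sum_{t=2}^n|u_t-u_{t-1}|-C_n)=0$, $\gamma_t^-(u_t+B)=0$, $\gamma_t^+(u_t-B)=0$. *)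

From Stdlib Require Import Reals Lra Lia Arith.
Open Scope R_scope.

(* Time indices are natural numbers t = 1..n; sequences are functions nat -> R,
   only their values on the relevant index ranges matter. *)

Fixpoint sum_1_to (t : nat) (f : nat -> R) : R :=
  match t with
  | O => 0
  | S k => sum_1_to k f + f (S k)
  end.

Definition clip (B x : R) : R := Rmax (- B) (Rmin B x).

(* Base learner E^j: projected OGD started at time j with initial point x0.
   ogd_aux B x0 y j k = x^{(j)}_{j+k}. *)
Fixpoint ogd_aux (B x0 : R) (y : nat -> R) (j k : nat) : R :=
  match k with
  | O => x0
  | S k' =>
      let x := ogd_aux B x0 y j k' in
      let t := (j + k')%nat in
      let tau := INR (t - j + 1) in
      clip B (x - / (2 * tau) * (2 * (x - y t)))
  end.

Definition base (B x0 : R) (y : nat -> R) (j t : nat) : R :=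
  ogd_aux B x0 y j (t - j).

Definition zeta (B G : R) : R := / (2 * (G + B) ^ 2).

Definition base_loss (B x0 : R) (y : nat -> R) (i t : nat) : R :=
  (y t - base B x0 y i t) ^ 2.

(* From v_t (a function on indices 1..t) to v_{t+1}. *)
Definition flh_update (B G x0 : R) (y : nat -> R) (t : nat) (v : nat -> R)
  : nat -> R :=
  fun i =>
    if Nat.eqb i (S t) then / INR (S t)
    else if andb (Nat.leb 1 i) (Nat.leb i t) then
      (1 - / INR (S t)) *
      (v i * exp (- zeta B G * base_loss B x0 y i t) /
       sum_1_to t (fun j => v j * exp (- zeta B G * base_loss B x0 y j t)))
    else 0.

(* flh_w k = v_{k+1} *)
Fixpoint flh_w (B G x0 : R) (y : nat -> R) (k : nat) : nat -> R :=
  match k with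
  | O => fun i => if Nat.eqb i 1 then 1 else 0
  | S k' => flh_update B G x0 y (S k') (flh_w B G x0 y k')
  end.

Definition flh_v (B G x0 : R) (y : nat -> R) (t : nat) : nat -> R :=
  flh_w B G x0 y (t - 1).

Definition flh_ogd_pred (B G x0 : R) (y : nat -> R) (t : nat) : R :=
  sum_1_to t (fun j => flh_v B G x0 y t j * base B x0 y j t).

Definition total_variation (n : nat) (u : nat -> R) : R :=
  sum_1_to (n - 1) (fun k => Rabs (u (S k) - u k)).

Definition tv_feasible (n : nat) (B Cn : R) (u : nat -> R) : Prop :=
  total_variation n u <= Cn /\ (forall t, (1 <= t <= n)%nat -> - B <= u t <= B).

Definition tv_objective (n : nat) (y u : nat -> R) : R :=
  / 2 * sum_1_to n (fun t => (y t - u t) ^ 2).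

Definition tv_optimal (n : nat) (B Cn : R) (y u : nat -> R) : Prop :=
  tv_feasible n B Cn u /\
  forall w, tv_feasible n B Cn w -> tv_objective n y u <= tv_objective n y w.

(* KKT conditions with multiplier lam for the TV constraint and gm (gamma^-),
   gp (gamma^+) for the box constraints; s indexed 0..n. *)
Definition tv_kkt (n : nat) (B Cn : R) (y u : nat -> R) (lam : R)
  (gm gp : nat -> R) : Prop :=
  0 <= lam /\
  (forall t, (1 <= t <= n)%nat -> 0 <= gm t /\ 0 <= gp t) /\
  exists s : nat -> R,
    (forall t, (t <= n)%nat -> -1 <= s t <= 1) /\
    (forall t, (1 <= t < n)%nat -> u (S t) > u t -> s t = 1) /\
    (forall t, (1 <= t < n)%nat -> u (S t) < u t -> s t = -1) /\
    s O = 0 /\ s n = 0 /\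
    (forall t, (1 <= t <= n)%nat ->
       u t - y t = lam * (s t - s (t - 1)%nat) + gm t - gp t) /\
    lam * (total_variation n u - Cn) = 0 /\
    (forall t, (1 <= t <= n)%nat -> gm t * (u t + B) = 0 /\ gp t * (u t - B) = 0).

Definition regret (n : nat) (y x u : nat -> R) : R :=
  sum_1_to n (fun t => (y t - x t) ^ 2 - (y t - u t) ^ 2).

(* On a stretch of the horizon where the comparator [u] has variation [V < 2 B], the
   KKT conditions (via summation by parts) show that some constant of [[-B, B]], namely
   a value of [u] on the stretch touching every face of the box that the stretch
   touches, loses at most [m V^2 + 6 lam V] against [u] over the [m] rounds of the
   stretch.  The projected OGD expert started at the beginning of the stretch loses
   [O(log m)] against that constant, and FLH, by exp-concavity of the squared loss with
   [zeta = 1 / (2 (G + B)^2)], loses [O(log n)] against that expert.  A greedy partition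
   of [1, n] into stretches of length at most [(n / Cn)^(2/3)] and variation at most
   [(Cn / n)^(1/3)] has [O(n^(1/3) Cn^(2/3))] pieces, and the [lam]-terms add up to
   [6 lam Cn <= 6 kappa n^(1/3) Cn^(2/3)].  When [Cn > n] the trivial bound
   [n (G + B)^2] suffices. *)

From Stdlib Require Import Reals Lra Lia Classical.
From Coquelicot Require Import Coquelicot.
Open Scope R_scope.

Fixpoint sum_from (a m : nat) (f : nat -> R) : R :=
  match m with O => 0 | S k => sum_from a k f + f (a + k)%nat end.

Lemma sum_1_to_from n f : sum_1_to n f = sum_from 1 n f.
Proof. induction n; simpl; [reflexivity | now rewrite IHn]. Qed.

Lemma sum_from_ext m a f g :
  (forall i, (a <= i < a + m)%nat -> f i = g i) -> sum_from a m f = sum_from a m g.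
Proof.
  induction m; intros H; simpl; [reflexivity|].
  rewrite IHm by (intros; apply H; lia). now rewrite (H (a + m)%nat) by lia.
Qed.

Lemma sum_from_add m a f g :
  sum_from a m (fun i => f i + g i) = sum_from a m f + sum_from a m g.
Proof. induction m; simpl; [lra | rewrite IHm; lra]. Qed.

Lemma sum_from_sub m a f g :
  sum_from a m (fun i => f i - g i) = sum_from a m f - sum_from a m g.
Proof. induction m; simpl; [lra | rewrite IHm; lra]. Qed.

Lemma sum_from_scal m a c f :
  sum_from a m (fun i => c * f i) = c * sum_from a m f.
Proof. induction m; simpl; [lra | rewrite IHm; lra]. Qed.

Lemma sum_from_const m a c : sum_from a m (fun _ => c) = INR m * c.
Proof. induction m; simpl sum_from; [simpl; lra | rewrite IHm, S_INR; lra]. Qed.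

Lemma sum_from_le m a f g :
  (forall i, (a <= i < a + m)%nat -> f i <= g i) -> sum_from a m f <= sum_from a m g.
Proof.
  induction m; intros H; simpl; [lra|].
  enough (sum_from a m f <= sum_from a m g /\ f (a + m)%nat <= g (a + m)%nat) by lra.
  split; [apply IHm; intros|]; apply H; lia.
Qed.

Lemma sum_from_ge0 m a f :
  (forall i, (a <= i < a + m)%nat -> 0 <= f i) -> 0 <= sum_from a m f.
Proof.
  intros H. replace 0 with (sum_from a m (fun _ => 0)) by (rewrite sum_from_const; lra).
  now apply sum_from_le.
Qed.

Lemma sum_from_gt0 m a f : (1 <= m)%nat ->
  (forall i, (a <= i < a + m)%nat -> 0 < f i) -> 0 < sum_from a m f.
Proof.
  intros Hm H. destruct m as [|m]; [lia|]. simpl.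
  enough (0 <= sum_from a m f /\ 0 < f (a + m)%nat) by lra.
  split; [apply sum_from_ge0; intros; apply Rlt_le|]; apply H; lia.
Qed.

Lemma sum_from_cat k m a f : sum_from a (m + k) f = sum_from a m f + sum_from (a + m) k f.
Proof.
  induction k; simpl; [rewrite Nat.add_0_r; lra|].
  rewrite Nat.add_succ_r; simpl. rewrite IHk, Nat.add_assoc; lra.
Qed.

Lemma term_le_sum_from m a f i : (forall j, (a <= j < a + m)%nat -> 0 <= f j) ->
  (a <= i < a + m)%nat -> f i <= sum_from a m f.
Proof.
  intros H Hi. replace m with ((i - a) + (1 + (a + m - S i)))%nat by lia.
  rewrite !sum_from_cat. simpl. replace (a + (i - a) + 0)%nat with i by lia.
  enough (0 <= sum_from a (i - a) f /\ 0 <= sum_from (a + (i - a) + 1) (a + m - S i) f) by lra.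
  split; apply sum_from_ge0; intros; apply H; lia.
Qed.

Lemma ln_1_plus_ge_nonneg u : 0 <= u -> u - u ^ 2 / 2 <= ln (1 + u).
Proof.
  intros Hu. destruct (Req_dec u 0) as [->|Hne].
  { rewrite Rplus_0_r, ln_1. lra. }
  set (phi x := ln (1 + x) - x + x ^ 2 / 2).
  assert (Hd : forall c, 0 <= c <= u -> derivable_pt_lim phi c (c ^ 2 / (1 + c))).
  { intros c Hc. apply is_derive_Reals. unfold phi. auto_derive; [lra | field; lra]. }
  destruct (MVT_cor2 phi _ 0 u ltac:(lra) Hd) as [c [Heq Hc]].
  unfold phi in Heq. rewrite Rplus_0_r, ln_1 in Heq.
  assert (0 <= c ^ 2 / (1 + c)) by (apply Rle_mult_inv_pos; nra).
  nra.
Qed.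

Lemma ln_1_plus_ge_neg u : -1 < u <= 0 -> u - u ^ 2 / (2 * (1 + u)) <= ln (1 + u).
Proof.
  intros Hu. destruct (Req_dec u 0) as [->|Hne].
  { rewrite Rplus_0_r, ln_1. unfold Rdiv. lra. }
  set (phi x := ln (1 + x) - x + x ^ 2 / (2 * (1 + x))).
  assert (Hd : forall c, u <= c <= 0 ->
            derivable_pt_lim phi c (- (c ^ 2 / (2 * (1 + c) ^ 2)))).
  { intros c Hc. apply is_derive_Reals. unfold phi. auto_derive; [lra | field; lra]. }
  destruct (MVT_cor2 phi _ u 0 ltac:(lra) Hd) as [c [Heq Hc]].
  unfold phi in Heq. rewrite Rplus_0_r, ln_1 in Heq.
  replace (0 ^ 2 / (2 * (1 + 0))) with 0 in Heq by (simpl; field).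
  assert (0 <= c ^ 2 / (2 * (1 + c) ^ 2)) by (apply Rle_mult_inv_pos; nra).
  nra.
Qed.

(* [w |-> exp (- z w^2)] is concave where [2 z w^2 <= 1]; this is its tangent line at [a]. *)
Lemma exp_neg_sq_tangent z a w : 0 < z -> 2 * z * a ^ 2 <= 1 -> 2 * z * w ^ 2 <= 1 ->
  exp (- z * w ^ 2) <= exp (- z * a ^ 2) * (1 + 2 * z * (a ^ 2 - a * w)).
Proof.
  intros Hz Ha Hw.
  set (u := 2 * z * (a ^ 2 - a * w)). set (E := z * (a - w) ^ 2).
  replace (- z * w ^ 2) with (- z * a ^ 2 + (u - E)) by (unfold u, E; ring).
  rewrite exp_plus. apply Rmult_le_compat_l; [apply Rlt_le, exp_pos|].
  assert (Hu : -1 / 4 <= u).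
  { assert (0 <= 2 * z * (a - w / 2) ^ 2) by (apply Rmult_le_pos; [lra | apply pow2_ge_0]).
    unfold u. nra. }
  assert (Haw : 2 * z * (a * w) <= 1).
  { assert (0 <= 2 * z * a ^ 2) by nra. assert (0 <= 2 * z * w ^ 2) by nra.
    assert ((2 * z * (a * w)) ^ 2 <= 1) by
      (replace ((2 * z * (a * w)) ^ 2) with ((2 * z * a ^ 2) * (2 * z * w ^ 2)) by ring; nra).
    nra. }
  assert (HE : 0 <= E) by (unfold E; apply Rmult_le_pos; [lra | apply pow2_ge_0]).
  enough (Hl : u - E <= ln (1 + u)).
  { rewrite <- (exp_ln (1 + u)) by lra.
    destruct Hl as [Hl | ->]; [left; now apply exp_increasing | now right]. }
  destruct (Rle_lt_dec 0 u) as [H0|H0].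
  - assert (u ^ 2 / 2 = E * (2 * z * a ^ 2)) by (unfold u, E; field).
    assert (u ^ 2 / 2 <= E) by nra.
    pose proof (ln_1_plus_ge_nonneg u H0). lra.
  - assert (u ^ 2 / (2 * (1 + u)) <= E).
    { apply Rmult_le_reg_r with (2 * (1 + u)); [lra|].
      unfold Rdiv. rewrite Rmult_assoc, Rinv_l, Rmult_1_r by lra.
      assert (u ^ 2 = E * (2 * (1 + u)) - 2 * E * (1 - 2 * z * (a * w))) by (unfold u, E; ring).
      nra. }
    pose proof (ln_1_plus_ge_neg u ltac:(lra)). lra.
Qed.

Lemma clip_range B x : 0 <= B -> - B <= clip B x <= B.
Proof. intros. unfold clip, Rmax, Rmin. destruct (Rle_dec B x), (Rle_dec (- B) _); lra. Qed.

Lemma clip_sq_dist_le B x c : - B <= c <= B -> (clip B x - c) ^ 2 <= (x - c) ^ 2.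
Proof. intros. unfold clip, Rmax, Rmin. destruct (Rle_dec B x), (Rle_dec (- B) _); nra. Qed.

Lemma ogd_aux_range B x0 y j k : 0 <= B -> - B <= x0 <= B -> - B <= ogd_aux B x0 y j k <= B.
Proof. intros. destruct k; simpl; [assumption | now apply clip_range]. Qed.

Lemma base_range B x0 y j t : 0 <= B -> - B <= x0 <= B -> - B <= base B x0 y j t <= B.
Proof. intros. now apply ogd_aux_range. Qed.

Section Weights.
Variables (B G x0 : R) (y : nat -> R).

Definition loss_factor (t j : nat) : R := exp (- zeta B G * base_loss B x0 y j t).

Definition flh_normalizer (t : nat) : R :=
  sum_1_to t (fun j => flh_v B G x0 y t j * loss_factor t j).

Lemma flh_v_succ t : (1 <= t)%nat ->
  flh_v B G x0 y (S t) = flh_update B G x0 y t (flh_v B G x0 y t).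
Proof.
  intros Ht. unfold flh_v. destruct t as [|t]; [lia|].
  replace (S (S t) - 1)%nat with (S t) by lia. now replace (S t - 1)%nat with t by lia.
Qed.

Lemma flh_update_new t v : flh_update B G x0 y t v (S t) = / INR (S t).
Proof. unfold flh_update. now rewrite Nat.eqb_refl. Qed.

Lemma flh_update_old t v i : (1 <= i <= t)%nat ->
  flh_update B G x0 y t v i =
  (1 - / INR (S t)) * (v i * loss_factor t i / sum_1_to t (fun j => v j * loss_factor t j)).
Proof.
  intros Hi. unfold flh_update.
  replace (Nat.eqb i (S t)) with false by (symmetry; apply Nat.eqb_neq; lia).
  replace (Nat.leb 1 i && Nat.leb i t)%bool with true
    by (symmetry; apply andb_true_intro; split; apply Nat.leb_le; lia).
  reflexivity.
Qed.

Lemma flh_v_simplex t : (1 <= t)%nat ->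
  (forall i, (1 <= i <= t)%nat -> 0 < flh_v B G x0 y t i) /\
  sum_1_to t (flh_v B G x0 y t) = 1.
Proof.
  induction t as [|t IH]; intros Ht; [lia|].
  destruct (Nat.eq_dec t 0) as [->|Ht0].
  { split; [intros i Hi; replace i with 1%nat by lia|]; unfold flh_v; simpl; lra. }
  destruct (IH ltac:(lia)) as [Hpos Hsum].
  set (v := flh_v B G x0 y t) in *.
  set (Z := sum_1_to t (fun j => v j * loss_factor t j)).
  assert (HZ : 0 < Z).
  { unfold Z. rewrite sum_1_to_from. apply sum_from_gt0; [lia|].
    intros. apply Rmult_lt_0_compat; [apply Hpos; lia | apply exp_pos]. }
  assert (Hinv : 0 < / INR (S t) < 1).
  { split; [apply Rinv_0_lt_compat, lt_0_INR; lia|].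
    rewrite <- Rinv_1. apply Rinv_lt_contravar; rewrite S_INR;
      pose proof (lt_0_INR t ltac:(lia)); lra. }
  rewrite flh_v_succ by lia. fold v. split.
  - intros i Hi. destruct (Nat.eq_dec i (S t)) as [->|Hne].
    + rewrite flh_update_new. lra.
    + rewrite flh_update_old by lia. fold Z.
      apply Rmult_lt_0_compat; [lra|]. apply Rdiv_lt_0_compat; [|exact HZ].
      apply Rmult_lt_0_compat; [apply Hpos; lia | apply exp_pos].
  - simpl sum_1_to. rewrite flh_update_new, !sum_1_to_from.
    rewrite (sum_from_ext _ _ _ (fun i => ((1 - / INR (S t)) / Z) * (v i * loss_factor t i))).
    + rewrite sum_from_scal, <- sum_1_to_from. fold Z. field.
      split; [apply not_0_INR; lia | apply Rgt_not_eq, HZ].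
    + intros i Hi. rewrite flh_update_old by lia. fold Z. field.
      split; [apply not_0_INR; lia | apply Rgt_not_eq, HZ].
Qed.

Lemma flh_v_pos t i : (1 <= i <= t)%nat -> 0 < flh_v B G x0 y t i.
Proof. intros Hi. apply (flh_v_simplex t); lia. Qed.

Lemma flh_v_sum t : (1 <= t)%nat -> sum_1_to t (flh_v B G x0 y t) = 1.
Proof. intros Ht. now apply flh_v_simplex. Qed.

Lemma flh_v_le_1 t i : (1 <= i <= t)%nat -> flh_v B G x0 y t i <= 1.
Proof.
  intros Hi. rewrite <- (flh_v_sum t), sum_1_to_from by lia.
  apply term_le_sum_from; [intros; apply Rlt_le, flh_v_pos|]; lia.
Qed.

Lemma flh_v_diag t : (1 <= t)%nat -> flh_v B G x0 y t t = / INR t.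
Proof.
  intros Ht. destruct (Nat.eq_dec t 1) as [->|Ht1]; [unfold flh_v; simpl; lra|].
  replace t with (S (t - 1)) by lia. rewrite flh_v_succ by lia. apply flh_update_new.
Qed.

Lemma flh_normalizer_pos t : (1 <= t)%nat -> 0 < flh_normalizer t.
Proof.
  intros Ht. unfold flh_normalizer. rewrite sum_1_to_from. apply sum_from_gt0; [lia|].
  intros. apply Rmult_lt_0_compat; [apply flh_v_pos; lia | apply exp_pos].
Qed.

Lemma flh_v_succ_old t i : (1 <= i <= t)%nat ->
  flh_v B G x0 y (S t) i =
  (1 - / INR (S t)) * (flh_v B G x0 y t i * loss_factor t i / flh_normalizer t).
Proof. intros Hi. rewrite flh_v_succ by lia. now apply flh_update_old. Qed.

End Weights.

Section FollowLeadingHistory.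
Variables (B G x0 : R) (y : nat -> R).
Hypotheses (HB : 0 <= B) (HG : 0 < G) (Hx0 : - B <= x0 <= B).

Let z := zeta B G.
Let x := flh_ogd_pred B G x0 y.

Lemma zeta_pos : 0 < z.
Proof. unfold z, zeta. apply Rinv_0_lt_compat. nra. Qed.

Lemma zeta_mul_sq : 2 * z * (G + B) ^ 2 = 1.
Proof. unfold z, zeta. field. nra. Qed.

Lemma flh_pred_range t : (1 <= t)%nat -> - B <= x t <= B.
Proof.
  intros Ht. unfold x, flh_ogd_pred.
  pose proof (flh_v_sum B G x0 y t Ht) as Hs. rewrite sum_1_to_from in *.
  assert (Hb : forall c, sum_from 1 t (fun j => c * flh_v B G x0 y t j) = c).
  { intros c. now rewrite sum_from_scal, Hs, Rmult_1_r. }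
  split; [eapply Rle_trans; [right; symmetry; apply (Hb (- B))|]
         | eapply Rle_trans; [|right; apply (Hb B)]]; apply sum_from_le; intros i Hi;
    pose proof (base_range B x0 y i t HB Hx0); pose proof (flh_v_pos B G x0 y t i ltac:(lia));
    nra.
Qed.

(* Exp-concavity of the squared loss. *)
Lemma flh_normalizer_le_exp t : (1 <= t)%nat -> - G <= y t <= G ->
  flh_normalizer B G x0 y t <= exp (- z * (y t - x t) ^ 2).
Proof.
  intros Ht Hy.
  set (a := y t - x t). set (h := exp (- z * a ^ 2)). set (v := flh_v B G x0 y t).
  pose proof (flh_pred_range t Ht). pose proof zeta_pos. pose proof zeta_mul_sq.
  assert (Hsq : forall w, - (G + B) <= w <= G + B -> 2 * z * w ^ 2 <= 1).
  { intros w Hw. rewrite <- zeta_mul_sq. apply Rmult_le_compat_l; [lra | nra]. }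
  unfold flh_normalizer. fold v. rewrite sum_1_to_from.
  apply Rle_trans with (sum_from 1 t (fun j => (h * (1 + 2 * z * (a ^ 2 - a * y t))) * v j
                                          + (h * (2 * z * a)) * (v j * base B x0 y j t))).
  - apply sum_from_le. intros j Hj.
    pose proof (base_range B x0 y j t HB Hx0).
    assert (Htan : loss_factor B G x0 y t j
                   <= h * (1 + 2 * z * (a ^ 2 - a * (y t - base B x0 y j t)))).
    { apply exp_neg_sq_tangent; [lra | apply Hsq; unfold a; lra | apply Hsq; lra]. }
    replace (h * (1 + 2 * z * (a ^ 2 - a * y t)) * v j + h * (2 * z * a) * (v j * base B x0 y j t))
      with (v j * (h * (1 + 2 * z * (a ^ 2 - a * (y t - base B x0 y j t))))) by ring.
    apply Rmult_le_compat_l; [apply Rlt_le, flh_v_pos; lia | exact Htan].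
  - rewrite sum_from_add, !sum_from_scal, <- !sum_1_to_from. unfold v.
    rewrite flh_v_sum by assumption.
    change (sum_1_to t (fun j => flh_v B G x0 y t j * base B x0 y j t)) with (x t).
    right. replace (x t) with (y t - a) by (unfold a; ring). ring.
Qed.

Lemma flh_log_weight_step t a : (1 <= a <= t)%nat -> - G <= y t <= G ->
  z * (y t - x t) ^ 2 <=
  ln (flh_v B G x0 y (S t) a) - ln (flh_v B G x0 y t a) + z * base_loss B x0 y a t
  + ln (INR (S t)) - ln (INR t).
Proof.
  intros Ha Hy.
  pose proof (flh_normalizer_pos B G x0 y t ltac:(lia)) as HZ.
  assert (Hln : ln (flh_normalizer B G x0 y t) <= - z * (y t - x t) ^ 2).
  { rewrite <- (ln_exp (- z * _)). apply ln_le; [exact HZ|].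
    apply flh_normalizer_le_exp; [lia | exact Hy]. }
  assert (Ht : 0 < INR t) by (apply lt_0_INR; lia).
  assert (HSt : 0 < INR (S t)) by (apply lt_0_INR; lia).
  assert (Hva : 0 < flh_v B G x0 y t a) by (apply flh_v_pos; lia).
  assert (Hsucc : flh_v B G x0 y (S t) a =
    INR t * / INR (S t) * flh_v B G x0 y t a * loss_factor B G x0 y t a
    * / flh_normalizer B G x0 y t).
  { rewrite flh_v_succ_old by lia. rewrite S_INR in *. field. lra. }
  rewrite Hsucc. unfold loss_factor.
  rewrite !ln_mult, !ln_Rinv, ln_exp; try lra;
    repeat (apply Rmult_lt_0_compat || apply Rinv_0_lt_compat || apply exp_pos); auto.
  fold z. lra.
Qed.

Lemma flh_log_weight_telescope m a : (1 <= a)%nat ->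
  (forall t, (a <= t < a + m)%nat -> - G <= y t <= G) ->
  z * sum_from a m (fun t => (y t - x t) ^ 2) <=
  ln (flh_v B G x0 y (a + m) a) - ln (flh_v B G x0 y a a)
  + z * sum_from a m (base_loss B x0 y a) + ln (INR (a + m)) - ln (INR a).
Proof.
  induction m as [|m IH]; intros Ha Hy; cbn [sum_from].
  - rewrite Nat.add_0_r. lra.
  - rewrite Nat.add_succ_r.
    pose proof (IH Ha ltac:(intros; apply Hy; lia)).
    pose proof (flh_log_weight_step (a + m) a ltac:(lia) ltac:(apply Hy; lia)). lra.
Qed.

Lemma flh_regret_vs_expert m a : (1 <= a)%nat ->
  (forall t, (a <= t < a + m)%nat -> - G <= y t <= G) ->
  sum_from a m (fun t => (y t - x t) ^ 2 - base_loss B x0 y a t)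
  <= 2 * (G + B) ^ 2 * ln (INR (a + m)).
Proof.
  intros Ha Hy. pose proof (flh_log_weight_telescope m a Ha Hy) as Htel.
  assert (ln (flh_v B G x0 y (a + m) a) <= 0).
  { rewrite <- ln_1. apply ln_le; [apply flh_v_pos | apply flh_v_le_1]; lia. }
  assert (0 < INR a) by (apply lt_0_INR; lia).
  rewrite flh_v_diag, ln_Rinv in Htel by assumption.
  pose proof zeta_pos. rewrite sum_from_sub.
  apply Rmult_le_reg_l with z; [assumption|].
  replace (z * (2 * (G + B) ^ 2 * ln (INR (a + m))))
    with (2 * z * (G + B) ^ 2 * ln (INR (a + m))) by ring.
  rewrite zeta_mul_sq. lra.
Qed.

End FollowLeadingHistory.

Lemma inv_succ_le_ln_diff k : 0 < k -> / (k + 1) <= ln (k + 1) - ln k.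
Proof.
  intros Hk.
  pose proof (exp_ineq1_le (ln (k / (k + 1)))) as H.
  rewrite exp_ln in H by (apply Rdiv_lt_0_compat; lra).
  unfold Rdiv in H. rewrite ln_mult, ln_Rinv in H by (try apply Rinv_0_lt_compat; lra).
  replace (k * / (k + 1)) with (1 - / (k + 1)) in H by (field; lra).
  lra.
Qed.

Lemma harmonic_le_1_plus_ln m : (1 <= m)%nat ->
  sum_from 1 m (fun k => / INR k) <= 1 + ln (INR m).
Proof.
  induction m as [|m IH]; intros Hm; [lia|].
  destruct (Nat.eq_dec m 0) as [->|Hm0]; [simpl; rewrite ln_1; lra|].
  cbn [sum_from]. replace (1 + m)%nat with (S m) by lia.
  pose proof (IH ltac:(lia)).
  pose proof (inv_succ_le_ln_diff (INR m) ltac:(apply lt_0_INR; lia)).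
  rewrite S_INR. lra.
Qed.

Lemma ogd_step_regret B G X Y c tau :
  - B <= X <= B -> - G <= Y <= G -> - B <= c <= B -> 0 < tau ->
  (Y - X) ^ 2 - (Y - c) ^ 2 <=
  (tau - 1) * (X - c) ^ 2 - tau * (clip B (X - / (2 * tau) * (2 * (X - Y))) - c) ^ 2
  + (G + B) ^ 2 / tau.
Proof.
  intros HX HY Hc Htau. set (g := X - Y).
  pose proof (clip_sq_dist_le B (X - / (2 * tau) * (2 * g)) c Hc) as Hclip.
  replace ((X - / (2 * tau) * (2 * g) - c) ^ 2)
    with ((X - c) ^ 2 - 2 * g * (X - c) / tau + g ^ 2 / tau ^ 2) in Hclip by (field; lra).
  assert (Hg : g ^ 2 / tau <= (G + B) ^ 2 / tau).
  { apply Rmult_le_compat_r; [apply Rlt_le, Rinv_0_lt_compat; lra | unfold g; nra]. }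
  apply Rmult_le_compat_l with (r := tau) in Hclip; [|lra].
  replace (tau * ((X - c) ^ 2 - 2 * g * (X - c) / tau + g ^ 2 / tau ^ 2))
    with (tau * (X - c) ^ 2 - 2 * g * (X - c) + g ^ 2 / tau) in Hclip by (field; lra).
  replace ((Y - X) ^ 2 - (Y - c) ^ 2) with (2 * g * (X - c) - (X - c) ^ 2) by (unfold g; ring).
  lra.
Qed.

(* The quadratic terms of [ogd_step_regret] telescope because [tau] grows by one per round. *)
Lemma ogd_regret_telescope B G x0 y m a c : - B <= x0 <= B -> - B <= c <= B ->
  (forall t, (a <= t < a + m)%nat -> - G <= y t <= G) ->
  sum_from a m (fun t => (y t - base B x0 y a t) ^ 2 - (y t - c) ^ 2) <=
  - INR m * (ogd_aux B x0 y a m - c) ^ 2 + (G + B) ^ 2 * sum_from 1 m (fun k => / INR k).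
Proof.
  intros Hx0 Hc. induction m as [|m IH]; intros Hy; cbn [sum_from].
  { simpl. nra. }
  pose proof (IH ltac:(intros; apply Hy; lia)).
  assert (HB : 0 <= B) by lra.
  replace (base B x0 y a (a + m)) with (ogd_aux B x0 y a m) by (unfold base; f_equal; lia).
  replace (1 + m)%nat with (S m) by lia.
  pose proof (ogd_step_regret B G (ogd_aux B x0 y a m) (y (a + m)%nat) c (INR (S m))
                (ogd_aux_range B x0 y a m HB Hx0) ltac:(apply Hy; lia) Hc
                ltac:(apply lt_0_INR; lia)).
  cbn [ogd_aux]. replace (a + m - a + 1)%nat with (S m) by lia.
  rewrite S_INR in *. unfold Rdiv in *. rewrite (Rmult_plus_distr_l ((G + B) ^ 2)). lra.
Qed.

Lemma ogd_regret_vs_const B G x0 y m a c : (1 <= m)%nat ->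
  - B <= x0 <= B -> - B <= c <= B ->
  (forall t, (a <= t < a + m)%nat -> - G <= y t <= G) ->
  sum_from a m (fun t => (y t - base B x0 y a t) ^ 2 - (y t - c) ^ 2)
  <= (G + B) ^ 2 * (1 + ln (INR m)).
Proof.
  intros Hm Hx0 Hc Hy.
  pose proof (ogd_regret_telescope B G x0 y m a c Hx0 Hc Hy).
  assert (0 <= INR m * (ogd_aux B x0 y a m - c) ^ 2)
    by (apply Rmult_le_pos; [apply pos_INR | apply pow2_ge_0]).
  assert ((G + B) ^ 2 * sum_from 1 m (fun k => / INR k) <= (G + B) ^ 2 * (1 + ln (INR m)))
    by (apply Rmult_le_compat_l; [apply pow2_ge_0 | now apply harmonic_le_1_plus_ln]).
  lra.
Qed.

Lemma sum_from_le_range f a m i k : (forall j, 0 <= f j) ->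
  (a <= i)%nat -> (i + k <= a + m)%nat -> sum_from i k f <= sum_from a m f.
Proof.
  intros Hf Hai Hik.
  replace m with ((i - a) + (k + (a + m - (i + k))))%nat by lia.
  rewrite !sum_from_cat. replace (a + (i - a))%nat with i by lia.
  assert (0 <= sum_from a (i - a) f) by (apply sum_from_ge0; auto).
  assert (0 <= sum_from (i + k) (a + m - (i + k)) f) by (apply sum_from_ge0; auto).
  lra.
Qed.

Lemma sum_by_parts k a g s : (1 <= a)%nat ->
  sum_from a (S k) (fun t => g t * (s t - s (t - 1)%nat)) =
  g (a + k)%nat * s (a + k)%nat - g a * s (a - 1)%nat
  - sum_from a k (fun t => s t * (g (S t) - g t)).
Proof.
  intros Ha. induction k as [|k IH].
  - cbn [sum_from]. rewrite Nat.add_0_r. ring.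
  - cbn [sum_from] in *. rewrite IH.
    replace (a + S k - 1)%nat with (a + k)%nat by lia.
    replace (S (a + k)) with (a + S k)%nat by lia. ring.
Qed.

Definition jump (u : nat -> R) (k : nat) : R := Rabs (u (S k) - u k).

Lemma abs_sub_le_sum_jump u i k : Rabs (u (i + k)%nat - u i) <= sum_from i k (jump u).
Proof.
  induction k as [|k IH]; cbn [sum_from].
  - rewrite Nat.add_0_r, Rminus_diag, Rabs_R0. lra.
  - unfold jump at 2. replace (i + S k)%nat with (S (i + k)) by lia.
    eapply Rle_trans; [|apply Rplus_le_compat_r, IH].
    replace (u (S (i + k)) - u i) with ((u (i + k)%nat - u i) + (u (S (i + k)) - u (i + k)%nat))
      by ring.
    apply Rabs_triang.
Qed.

Lemma abs_sub_le_variation u a m i j : (a <= i <= a + m)%nat -> (a <= j <= a + m)%nat ->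
  Rabs (u j - u i) <= sum_from a m (jump u).
Proof.
  assert (Hjump : forall k, 0 <= jump u k) by (intros; apply Rabs_pos).
  intros Hi Hj. destruct (Nat.le_ge_cases i j) as [Hij|Hji].
  - pose proof (abs_sub_le_sum_jump u i (j - i)). replace (i + (j - i))%nat with j in H by lia.
    eapply Rle_trans; [exact H | apply sum_from_le_range; auto; lia].
  - pose proof (abs_sub_le_sum_jump u j (i - j)). replace (j + (i - j))%nat with i in H by lia.
    rewrite Rabs_minus_sym. eapply Rle_trans; [exact H | apply sum_from_le_range; auto; lia].
Qed.

Section KKT.
Variables (n : nat) (B lam : R) (y u gm gp s : nat -> R).
Hypotheses
  (Hlam : 0 <= lam)
  (Hu : forall t, (1 <= t <= n)%nat -> - B <= u t <= B)
  (Hs : forall t, (t <= n)%nat -> -1 <= s t <= 1)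
  (Hs_up : forall t, (1 <= t < n)%nat -> u (S t) > u t -> s t = 1)
  (Hs_down : forall t, (1 <= t < n)%nat -> u (S t) < u t -> s t = -1)
  (Hstat : forall t, (1 <= t <= n)%nat -> u t - y t = lam * (s t - s (t - 1)%nat) + gm t - gp t)
  (Hslack : forall t, (1 <= t <= n)%nat -> gm t * (u t + B) = 0 /\ gp t * (u t - B) = 0).

Lemma kkt_sign_mul_jump t : (1 <= t < n)%nat -> s t * (u (S t) - u t) = jump u t.
Proof.
  intros Ht. unfold jump.
  destruct (Rtotal_order (u (S t)) (u t)) as [Hlt|[Heq|Hgt]].
  - rewrite Hs_down, Rabs_left by (auto || lra). ring.
  - rewrite Heq, Rminus_diag, Rabs_R0. ring.
  - rewrite Hs_up, Rabs_right by (auto || lra). ring.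
Qed.

(* A stretch of variation below [2 B] cannot touch both faces of the box, so one of its
   points touches every face the stretch touches. *)
Lemma exists_slack_anchor a m : (1 <= a)%nat -> (a + m <= n)%nat ->
  sum_from a m (jump u) < 2 * B ->
  exists t0, (a <= t0 <= a + m)%nat /\
    forall t, (a <= t <= a + m)%nat -> (u t - u t0) * (gm t - gp t) = 0.
Proof.
  intros Ha Han HV.
  assert (Hface : exists t0, (a <= t0 <= a + m)%nat /\
            forall t, (a <= t <= a + m)%nat -> (u t = B \/ u t = - B) -> u t0 = u t).
  { destruct (classic (exists t, (a <= t <= a + m)%nat /\ (u t = B \/ u t = - B)))
      as [[t1 [Ht1 Hface1]]|Hnone].
    - exists t1. split; [exact Ht1|]. intros t Ht Hface.
      pose proof (abs_sub_le_variation u a m t t1 Ht Ht1) as Hvar.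
      apply Rabs_le_between in Hvar. destruct Hface1, Hface; lra.
    - exists a. split; [lia|]. intros t Ht Hface. exfalso. eauto. }
  destruct Hface as [t0 [Ht0 Hface]]. exists t0. split; [exact Ht0|].
  intros t Ht. destruct (Hslack t ltac:(lia)) as [Hm Hp].
  destruct (Req_dec (u t) B) as [HuB|HuB]; [rewrite (Hface t Ht (or_introl HuB)); ring|].
  destruct (Req_dec (u t) (- B)) as [HuB'|HuB']; [rewrite (Hface t Ht (or_intror HuB')); ring|].
  apply Rmult_integral in Hm. apply Rmult_integral in Hp.
  destruct Hm as [-> | Hm]; [|lra]. destruct Hp as [-> | Hp]; [ring | lra].
Qed.

(* Summation by parts moves the difference onto [u], and stationarity of the signs turns
   [s t * (u (t + 1) - u t)] into a jump; only two boundary terms remain. *)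
Lemma kkt_cross_term_ge a m c : (1 <= a)%nat -> (a + m <= n)%nat ->
  (forall t, (a <= t <= a + m)%nat -> Rabs (u t - c) <= sum_from a m (jump u)) ->
  - 3 * sum_from a m (jump u) <= sum_from a (S m) (fun t => (u t - c) * (s t - s (t - 1)%nat)).
Proof.
  intros Ha Han Hdev. set (V := sum_from a m (jump u)) in *.
  rewrite sum_by_parts by assumption.
  rewrite (sum_from_ext _ _ _ (jump u)).
  2:{ intros t Ht. rewrite <- kkt_sign_mul_jump by lia. f_equal. ring. }
  fold V.
  assert (Hboundary : forall t k, (a <= t <= a + m)%nat -> (k <= n)%nat ->
            Rabs ((u t - c) * s k) <= V).
  { intros t k Ht Hk. rewrite Rabs_mult. rewrite <- (Rmult_1_r V).
    apply Rmult_le_compat; try apply Rabs_pos; [now apply Hdev | apply Rabs_le, Hs, Hk]. }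
  pose proof (Hboundary (a + m)%nat (a + m)%nat ltac:(lia) ltac:(lia)) as H1.
  pose proof (Hboundary a (a - 1)%nat ltac:(lia) ltac:(lia)) as H2.
  apply Rabs_le_between in H1, H2. lra.
Qed.

Lemma const_regret_on_stretch a m : (1 <= a)%nat -> (a + m <= n)%nat ->
  sum_from a m (jump u) < 2 * B ->
  exists c, - B <= c <= B /\
    sum_from a (S m) (fun t => (y t - c) ^ 2 - (y t - u t) ^ 2)
    <= INR (S m) * (sum_from a m (jump u)) ^ 2 + 6 * lam * sum_from a m (jump u).
Proof.
  intros Ha Han HV. set (V := sum_from a m (jump u)) in *.
  destruct (exists_slack_anchor a m Ha Han HV) as [t0 [Ht0 Hvanish]].
  set (c := u t0). exists c. split; [apply Hu; lia|].
  assert (Hdev : forall t, (a <= t <= a + m)%nat -> Rabs (u t - c) <= V)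
    by (intros; now apply abs_sub_le_variation).
  rewrite (sum_from_ext _ _ _ (fun t => (u t - c) ^ 2
             + (- 2 * lam) * ((u t - c) * (s t - s (t - 1)%nat)))).
  2:{ intros t Ht. pose proof (Hvanish t ltac:(lia)) as Hv. fold c in Hv.
      replace (y t) with (u t - (lam * (s t - s (t - 1)%nat) + gm t - gp t))
        by (pose proof (Hstat t ltac:(lia)); lra).
      transitivity ((u t - c) ^ 2 + (- 2 * lam) * ((u t - c) * (s t - s (t - 1)%nat))
                    - 2 * ((u t - c) * (gm t - gp t))); [ring | rewrite Hv; ring]. }
  rewrite sum_from_add, sum_from_scal.
  assert (Hsq : sum_from a (S m) (fun t => (u t - c) ^ 2) <= INR (S m) * V ^ 2).
  { rewrite <- (sum_from_const (S m) a). apply sum_from_le. intros t Ht.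
    rewrite <- pow2_abs. apply pow_incr. split; [apply Rabs_pos | apply Hdev; lia]. }
  pose proof (kkt_cross_term_ge a m c Ha Han Hdev) as Hcross. fold V in Hcross.
  nra.
Qed.

End KKT.

Section Partition.
Variables (n : nat) (f d : nat -> R) (K L th mu : R).
Hypotheses (Hd : forall k, 0 <= d k) (HK : 0 <= K) (HL : 1 <= L) (Hth : 0 < th) (Hmu : 0 <= mu).
Hypothesis Hpiece : forall p m, (p + S m <= n)%nat -> INR (S m) <= L ->
  sum_from (S p) m d <= th -> sum_from (S p) (S m) f <= K + mu * sum_from (S p) m d.

Let closed_bound (p : nat) : R :=
  K * (2 * INR p / L + sum_from 1 p d / th) + mu * sum_from 1 p d.

Lemma closing_cost p m : ~ (INR (S (S m)) <= L /\ sum_from (S p) (S m) d <= th) ->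
  K <= K * (2 * INR (S m) / L + sum_from (S p) (S m) d / th).
Proof.
  intros Hclose. rewrite <- (Rmult_1_r K) at 1. apply Rmult_le_compat_l; [exact HK|].
  assert (0 <= 2 * INR (S m) / L) by (apply Rdiv_le_0_compat; [apply Rmult_le_pos, pos_INR|]; lra).
  assert (0 <= sum_from (S p) (S m) d / th)
    by (apply Rdiv_le_0_compat; [apply sum_from_ge0; auto | lra]).
  apply not_and_or in Hclose. destruct Hclose as [Hlong|Hvar].
  - apply Rnot_le_lt in Hlong.
    assert (L < 2 * INR (S m)) by (rewrite !S_INR in *; pose proof (pos_INR m); lra).
    enough (1 < 2 * INR (S m) / L) by lra.
    apply Rmult_lt_reg_r with L; [lra|]. unfold Rdiv. rewrite Rmult_assoc, Rinv_l; lra.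
  - apply Rnot_le_lt in Hvar. enough (1 < sum_from (S p) (S m) d / th) by lra.
    apply Rmult_lt_reg_r with th; [lra|]. unfold Rdiv. rewrite Rmult_assoc, Rinv_l; lra.
Qed.

(* Greedy partition: the open piece [p + 1, k] is closed as soon as extending it would
   make it longer than [L] or give it variation above [th]. *)
Lemma partition_invariant k : (1 <= k <= n)%nat ->
  exists p m, (p + S m = k)%nat /\ INR (S m) <= L /\ sum_from (S p) m d <= th /\
    sum_from 1 p f <= closed_bound p.
Proof.
  induction k as [|k IH]; intros Hk; [lia|].
  destruct (Nat.eq_dec k 0) as [->|Hk0].
  { exists 0%nat, 0%nat. unfold closed_bound. simpl. unfold Rdiv. repeat split; lra. }
  destruct (IH ltac:(lia)) as [p [m [Hpm [HmL [Hvar Hf]]]]].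
  destruct (classic (INR (S (S m)) <= L /\ sum_from (S p) (S m) d <= th)) as [[HmL' Hvar']|Hclose].
  - exists p, (S m). repeat split; auto. lia.
  - exists k, 0%nat. split; [lia|]. split; [simpl; lra|]. split; [simpl; lra|].
    pose proof (closing_cost p m Hclose).
    pose proof (Hpiece p m ltac:(lia) HmL Hvar).
    unfold closed_bound in *. subst k.
    rewrite !(sum_from_cat (S m) p 1). replace (1 + p)%nat with (S p) by lia.
    cbn [sum_from] in *. rewrite plus_INR. pose proof (Hd (S p + m)%nat).
    unfold Rdiv in *. nra.
Qed.

Lemma partition_bound : (1 <= n)%nat ->
  sum_from 1 n f <= K * (2 * INR n / L + sum_from 1 (n - 1) d / th + 1)
                    + mu * sum_from 1 (n - 1) d.
Proof.
  intros Hn. destruct (partition_invariant n ltac:(lia)) as [p [m [Hpm [HmL [Hvar Hf]]]]].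
  pose proof (Hpiece p m ltac:(lia) HmL Hvar).
  subst n. replace (p + S m - 1)%nat with (p + m)%nat by lia.
  rewrite !sum_from_cat. replace (1 + p)%nat with (S p) by lia.
  unfold closed_bound in Hf.
  assert (INR p <= INR (p + S m)) by (apply le_INR; lia).
  assert (0 <= sum_from (S p) m d) by (apply sum_from_ge0; auto).
  assert (K * (2 * INR p / L) <= K * (2 * INR (p + S m) / L)).
  { apply Rmult_le_compat_l; [exact HK|]. apply Rmult_le_compat_r; [|lra].
    apply Rlt_le, Rinv_0_lt_compat; lra. }
  assert (0 <= K * (sum_from (S p) m d / th)).
  { apply Rmult_le_pos; [exact HK|]. apply Rdiv_le_0_compat; lra. }
  assert (0 <= mu * sum_from (S p) m d) by (apply Rmult_le_pos; lra).
  unfold Rdiv in *. lra.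
Qed.

End Partition.

Lemma one_le_ln_nat n : (3 <= n)%nat -> 1 <= ln (INR n).
Proof.
  intros Hn. rewrite <- ln_exp at 1. apply ln_le; [apply exp_pos|].
  pose proof exp_le_3. apply le_INR in Hn. simpl in Hn. lra.
Qed.

Lemma ln_succ_le_twice_ln x : 2 <= x -> ln (x + 1) <= 2 * ln x.
Proof.
  intros Hx. replace (2 * ln x) with (ln (x * x)) by (rewrite ln_mult by lra; ring).
  apply ln_le; nra.
Qed.

Lemma Rpower_third_cube x : 0 < x -> Rpower x (1 / 3) ^ 3 = x.
Proof.
  intros Hx. rewrite <- Rpower_pow by apply exp_pos. rewrite Rpower_mult.
  replace (1 / 3 * INR 3) with 1 by (simpl; field). now apply Rpower_1.
Qed.

Lemma Rpower_two_thirds x : Rpower x (2 / 3) = Rpower x (1 / 3) ^ 2.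
Proof. replace (2 / 3) with (1 / 3 + 1 / 3) by field. rewrite Rpower_plus. ring. Qed.

Lemma le_Rpower_third_mul_two_thirds N C : 0 < N <= C ->
  N <= Rpower N (1 / 3) * Rpower C (2 / 3).
Proof.
  intros HNC. rewrite Rpower_two_thirds.
  assert (Rpower N (1 / 3) <= Rpower C (1 / 3)) by (apply Rle_Rpower_l; lra).
  assert (0 < Rpower N (1 / 3)) by apply exp_pos.
  rewrite <- (Rpower_third_cube N) at 1 by lra.
  set (a := Rpower N (1 / 3)) in *. set (c := Rpower C (1 / 3)) in *.
  assert (a ^ 2 <= c ^ 2) by nra. nra.
Qed.

Lemma mul_le_of_le_cube_root_ratio N C lam kappa : 0 < C ->
  lam <= kappa * Rpower N (1 / 3) / Rpower C (1 / 3) ->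
  lam * C <= kappa * (Rpower N (1 / 3) * Rpower C (2 / 3)).
Proof.
  intros HC Hlam. pose proof (Rpower_third_cube C HC) as HC3. rewrite Rpower_two_thirds.
  set (a := Rpower N (1 / 3)) in *. set (c := Rpower C (1 / 3)) in *.
  assert (0 < c) by apply exp_pos.
  apply Rle_trans with (kappa * a / c * C); [apply Rmult_le_compat_r; lra|].
  right. rewrite <- HC3. field. lra.
Qed.

Lemma regret_le_horizon B G x0 n y u : 0 <= B -> - B <= x0 <= B ->
  (forall t, (1 <= t <= n)%nat -> - G <= y t <= G) ->
  regret n y (flh_ogd_pred B G x0 y) u <= INR n * (G + B) ^ 2.
Proof.
  intros HB Hx0 Hy.
  unfold regret. rewrite sum_1_to_from, <- (sum_from_const n 1). apply sum_from_le.
  intros t Ht. pose proof (Hy t ltac:(lia)).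
  pose proof (flh_pred_range B G x0 y HB Hx0 t ltac:(lia)).
  pose proof (pow2_ge_0 (y t - u t)). nra.
Qed.

Section Regret.
Variables (B G x0 lam Cn : R) (n : nat) (y u gm gp : nat -> R).
Hypotheses (HB : 1 <= B) (HBG : B <= G) (Hn : (3 <= n)%nat) (Hx0 : - B <= x0 <= B)
  (Hy : forall t, (1 <= t <= n)%nat -> - G <= y t <= G)
  (Hfeas : tv_feasible n B Cn u) (Hkkt : tv_kkt n B Cn y u lam gm gp).

Let x := flh_ogd_pred B G x0 y.
Let f t := (y t - x t) ^ 2 - (y t - u t) ^ 2.

Lemma regret_on_stretch th p m : 0 < th <= 1 -> (p + S m <= n)%nat ->
  INR (S m) <= / th ^ 2 -> sum_from (S p) m (jump u) <= th ->
  sum_from (S p) (S m) f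
  <= (6 * (G + B) ^ 2 * ln (INR n) + 1) + 6 * lam * sum_from (S p) m (jump u).
Proof.
  intros Hth Hpm HmL HV. set (V := sum_from (S p) m (jump u)) in *.
  assert (HV0 : 0 <= V) by (apply sum_from_ge0; intros; apply Rabs_pos).
  destruct Hfeas as [_ Hu].
  destruct Hkkt as [Hlam [_ [s [Hs [Hs_up [Hs_down [_ [_ [Hstat [_ Hslack]]]]]]]]]].
  destruct (const_regret_on_stretch n B lam y u gm gp s Hlam Hu Hs Hs_up Hs_down Hstat Hslack
              (S p) m ltac:(lia) ltac:(lia) ltac:(fold V; lra)) as [c [Hc Hconst]].
  fold V in Hconst.
  assert (Hyr : forall t, (S p <= t < S p + S m)%nat -> - G <= y t <= G)
    by (intros; apply Hy; lia).
  pose proof (flh_regret_vs_expert B G x0 y ltac:(lra) ltac:(lra) Hx0 (S m) (S p)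
                ltac:(lia) Hyr) as Hflh.
  pose proof (ogd_regret_vs_const B G x0 y (S m) (S p) c ltac:(lia) Hx0 Hc Hyr) as Hogd.
  rewrite (sum_from_ext _ _ f (fun t => ((y t - x t) ^ 2 - base_loss B x0 y (S p) t)
             + ((y t - base B x0 y (S p) t) ^ 2 - (y t - c) ^ 2)
             + ((y t - c) ^ 2 - (y t - u t) ^ 2))) by (intros; unfold f, base_loss; ring).
  rewrite !sum_from_add.
  pose proof (one_le_ln_nat n Hn).
  assert (ln (INR (S p + S m)) <= 2 * ln (INR n)).
  { eapply Rle_trans; [|apply ln_succ_le_twice_ln; apply le_INR in Hn; simpl in Hn; lra].
    apply ln_le; [apply lt_0_INR; lia|]. rewrite <- S_INR. apply le_INR. lia. }
  assert (ln (INR (S m)) <= ln (INR n)) by (apply ln_le; [apply lt_0_INR | apply le_INR]; lia).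
  assert (INR (S m) * V ^ 2 <= 1).
  { replace 1 with (/ th ^ 2 * th ^ 2) by (field; lra).
    apply Rmult_le_compat; [apply pos_INR | nra | exact HmL | nra]. }
  pose proof (pow2_ge_0 (G + B)).
  fold x in Hflh. nra.
Qed.

Lemma regret_le_scale th : 0 < th <= 1 ->
  regret n y x u <=
  (6 * (G + B) ^ 2 * ln (INR n) + 1) * (2 * INR n * th ^ 2 + Cn / th + 1) + 6 * lam * Cn.
Proof.
  intros Hth.
  assert (HTV : sum_from 1 (n - 1) (jump u) <= Cn).
  { destruct Hfeas as [HTV _]. unfold total_variation in HTV. now rewrite sum_1_to_from in HTV. }
  assert (HTV0 : 0 <= sum_from 1 (n - 1) (jump u)) by (apply sum_from_ge0; intros; apply Rabs_pos).
  assert (Hlam : 0 <= lam) by apply Hkkt.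
  pose proof (pow2_ge_0 (G + B)). pose proof (one_le_ln_nat n Hn).
  assert (HL : 1 <= / th ^ 2).
  { rewrite <- Rinv_1. apply Rinv_le_contravar; [|]; nra. }
  pose proof (partition_bound n f (jump u) (6 * (G + B) ^ 2 * ln (INR n) + 1) (/ th ^ 2) th
                (6 * lam) (fun k => Rabs_pos _) ltac:(nra) HL ltac:(lra) ltac:(lra)
                (fun p m Hpm HmL HV => regret_on_stretch th p m Hth Hpm HmL HV) ltac:(lia))
    as Hpart.
  unfold regret. rewrite sum_1_to_from. fold f.
  replace (2 * INR n / / th ^ 2) with (2 * INR n * th ^ 2) in Hpart by (field; lra).
  assert (sum_from 1 (n - 1) (jump u) / th <= Cn / th)
    by (apply Rmult_le_compat_r; [apply Rlt_le, Rinv_0_lt_compat|]; lra).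
  set (K := 6 * (G + B) ^ 2 * ln (INR n) + 1) in *.
  assert (0 <= K) by (unfold K; nra).
  assert (K * (sum_from 1 (n - 1) (jump u) / th) <= K * (Cn / th))
    by (apply Rmult_le_compat_l; assumption).
  assert (lam * sum_from 1 (n - 1) (jump u) <= lam * Cn) by (apply Rmult_le_compat_l; assumption).
  lra.
Qed.

Lemma regret_le_cube_root : 0 < Cn -> Cn <= INR n ->
  regret n y x u <=
  4 * (6 * (G + B) ^ 2 + 1) * ln (INR n) * Rmax (Rpower (INR n) (1 / 3) * Rpower Cn (2 / 3)) 1
  + 6 * lam * Cn.
Proof.
  intros HC HCn. assert (Hn0 : 0 < INR n) by (apply lt_0_INR; lia).
  assert (Hle : Rpower Cn (1 / 3) <= Rpower (INR n) (1 / 3)) by (apply Rle_Rpower_l; lra).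
  pose proof (Rpower_third_cube (INR n) Hn0) as Hn3. pose proof (Rpower_third_cube Cn HC) as HC3.
  pose proof (one_le_ln_nat n Hn). pose proof (pow2_ge_0 (G + B)).
  rewrite Rpower_two_thirds.
  set (a3 := Rpower (INR n) (1 / 3)) in *. set (c3 := Rpower Cn (1 / 3)) in *.
  assert (0 < c3) by apply exp_pos.
  assert (Hth : 0 < c3 / a3 <= 1).
  { split; [apply Rdiv_lt_0_compat; lra|]. apply Rmult_le_reg_r with a3; [lra|].
    unfold Rdiv. rewrite Rmult_assoc, Rinv_l; lra. }
  pose proof (regret_le_scale (c3 / a3) Hth) as Hr.
  replace (2 * INR n * (c3 / a3) ^ 2 + Cn / (c3 / a3) + 1) with (3 * (a3 * c3 ^ 2) + 1) in Hr
    by (rewrite <- Hn3, <- HC3; field; lra).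
  pose proof (Rmax_l (a3 * c3 ^ 2) 1). pose proof (Rmax_r (a3 * c3 ^ 2) 1).
  enough ((6 * (G + B) ^ 2 * ln (INR n) + 1) * (3 * (a3 * c3 ^ 2) + 1)
          <= (6 * (G + B) ^ 2 + 1) * ln (INR n) * (4 * Rmax (a3 * c3 ^ 2) 1)) by lra.
  apply Rmult_le_compat; nra.
Qed.

End Regret.

Theorem lemma3 :
  forall (B G kappa : R),
    1 <= B -> B <= G -> 0 < kappa ->
    exists c : R, 0 < c /\
      forall (n : nat) (Cn x0 lam : R) (y u gm gp : nat -> R),
        (3 <= n)%nat ->
        0 < Cn ->
        (forall t, (1 <= t <= n)%nat -> - G <= y t <= G) ->
        - B <= x0 <= B ->
        tv_optimal n B Cn y u ->
        tv_kkt n B Cn y u lam gm gp ->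
        lam <= kappa * Rpower (INR n) (1 / 3) / Rpower Cn (1 / 3) ->
        regret n y (flh_ogd_pred B G x0 y) u
          <= c * ln (INR n) * Rmax (Rpower (INR n) (1 / 3) * Rpower Cn (2 / 3)) 1.
Proof.
  intros B G kappa HB HBG Hk.
  exists (4 * (6 * (G + B) ^ 2 + 1) + 6 * kappa + (G + B) ^ 2).
  split; [pose proof (pow2_ge_0 (G + B)); lra|].
  intros n Cn x0 lam y u gm gp Hn HC Hy Hx0 [Hfeas _] Hkkt Hlam.
  assert (Hn0 : 0 < INR n) by (apply lt_0_INR; lia).
  pose proof (one_le_ln_nat n Hn). set (l := ln (INR n)) in *.
  set (P := Rpower (INR n) (1 / 3) * Rpower Cn (2 / 3)).
  assert (HP : 0 <= P) by (apply Rmult_le_pos; apply Rlt_le, exp_pos).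
  pose proof (Rmax_l P 1). pose proof (Rmax_r P 1). set (X := Rmax P 1) in *.
  assert (HPX : P <= l * X) by nra.
  assert (HM2 : 0 <= (G + B) ^ 2 * (l * X)) by (apply Rmult_le_pos; [apply pow2_ge_0 | lra]).
  destruct (Rle_lt_dec Cn (INR n)) as [HCn|HCn].
  - pose proof (regret_le_cube_root B G x0 lam Cn n y u gm gp HB HBG Hn Hx0 Hy Hfeas Hkkt HC HCn)
      as Hreg.
    pose proof (mul_le_of_le_cube_root_ratio (INR n) Cn lam kappa HC Hlam) as HlamC.
    assert (kappa * P <= kappa * (l * X)) by (apply Rmult_le_compat_l; lra).
    fold P in Hreg, HlamC. fold X l in Hreg. lra.
  - pose proof (regret_le_horizon B G x0 n y u ltac:(lra) Hx0 Hy) as Hreg.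
    pose proof (le_Rpower_third_mul_two_thirds (INR n) Cn ltac:(lra)) as HnP. fold P in HnP.
    assert ((G + B) ^ 2 * INR n <= (G + B) ^ 2 * (l * X))
      by (apply Rmult_le_compat_l; [apply pow2_ge_0 | lra]).
    assert (0 <= kappa * (l * X)) by (apply Rmult_le_pos; lra).
    lra.
Qed.
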